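(* Let $d_0<d_1<\cdots$ be the increasing enumeration of $\{m\ge1:\ c_m=0\}$ and $z_n=\left(\frac{d_{4n}+1}{4}-n\right)\bmod 2$ for $n\ge0$. Then for every integer $m\ge2$ and every integer $n\in\left[2^{2m},\frac43\,2^{2m}\right]$ we have $z_n=0$.
   Context: For $n\in\mathbb{N}$ let $s_2(n)$ be the sum of the binary digits of $n$ and $t_n=s_2(n)\bmod 2$ (the Prouhet–Thue–Morse sequence). Let $F(X)=\sum_{n\ge1}t_nX^n\in\mathbb{F}_2[[X]]$ and let $G(X)=\sum_{n\ge1}c_nX^n\in\mathbb{F}_2[[X]]$ be its compositional inverse, i.e. $F(G(X))=G(F(X))=X$. The $c_n$ are identified with integers in $\{0,1\}$. The sequence $(d_n)$ is indexed from $0$, so $d_0=3$, and $\frac{d_{4n}+1}{4}$ is always an integer. *)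

From HB Require Import structures.
From mathcomp Require Import all_boot all_order all_algebra.
Set Implicit Arguments. Unset Strict Implicit. Unset Printing Implicit Defensive.
Import Order.TTheory GRing.Theory Num.Theory.
Local Open Scope ring_scope.

(* s_2(n): sum of binary digits of n (digit i is (n / 2^i) mod 2; digits with
   i > n vanish since 2^i > n). *)
Definition s2 (n : nat) : nat := \sum_(i < n.+1) ((n %/ 2 ^ i) %% 2).

Definition tm (n : nat) : 'F_2 := ((s2 n)%:R)%R.

Definition Ftrunc (N : nat) : {poly 'F_2} :=
  \poly_(i < N.+1) (if i == 0%N then 0%R else tm i).

Definition Gtrunc (c : nat -> 'F_2) (N : nat) : {poly 'F_2} :=
  \poly_(i < N.+1) c i.

(* c is the coefficient sequence of the compositional inverse G of F:
   G has zero constant term and F(G(X)) = G(F(X)) = X in F_2[[X]].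
   Since both series have zero constant term, the coefficient of X^N of a
   composition only depends on the truncations to degree N. *)
Definition is_comp_inverse (c : nat -> 'F_2) : Prop :=
  c 0%N = 0%R /\
  (forall N : nat, (Gtrunc c N \Po Ftrunc N)`_N = ((N == 1%N)%:R)%R) /\
  (forall N : nat, (Ftrunc N \Po Gtrunc c N)`_N = ((N == 1%N)%:R)%R).

Definition is_zero_enum (c : nat -> 'F_2) (d : nat -> nat) : Prop :=
  (forall i j : nat, (i < j)%N -> (d i < d j)%N) /\
  (forall m : nat, ((1 <= m)%N /\ c m = 0%R) <-> exists n : nat, d n = m).

Definition z (d : nat -> nat) (n : nat) : int :=
  ((Posz ((d (4 * n)%N).+1 %/ 4) - Posz n) %% 2)%Z.

From HB Require Import structures.
From mathcomp Require Import all_boot all_order all_algebra.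
From mathcomp Require Import ring zify.
Set Implicit Arguments. Unset Strict Implicit. Unset Printing Implicit Defensive.
Import GRing.Theory.

(* The Thue-Morse series F satisfies F(X) = (1+X) F(X^2) + X/(1+X^2) and, over F_2,
   F(X^2) = F^2, hence (1+X)^3 F^2 + (1+X)^2 F + X = 0.  Substituting X := G, with
   F(G) = X, shows that B := 1 + X + X G is a cube root of 1 + X.  The product
   M = prod_j (1 + X^(4^j)) satisfies M = (1+X) M^4, so (1+X) M^2 is another cube root of
   1 + X with constant term 1; cube roots of such series are unique, hence B = (1+X) M^2
   and, for s >= 1, c_s = 1 exactly when floor((s+1)/2) has only the digits 0 and 1 in
   base 4 (a Moser-de Bruijn number).  So the zeros of c come in pairs, and as there are
   exactly 2^(m+1) Moser-de Bruijn numbers below 2K, K = n + 2^m, and none in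
   [4^(m+1)/3, 4^(m+1)), the zero d_(4n) is 4K - 1; thus z_n = 2^m mod 2 = 0.  All series
   identities are proved for truncations, modulo X^K. *)

Local Open Scope ring_scope.

Section CongruenceModXn.
Variable R : comNzRingType.
Implicit Types (p q r u : {poly R}) (K : nat).

Definition congX K p q := exists r, p = q + 'X^K * r.

Lemma congXP K p q : congX K p q <-> forall i, (i < K)%N -> p`_i = q`_i.
Proof.
split=> [[r ->] i ltiK | eq_pq]; first by rewrite coefD coefXnM ltiK addr0.
exists (drop_poly K (p - q)).
have take0 : take_poly K (p - q) = 0.
  apply/polyP=> i; rewrite coef_take_poly coef0 coefB.
  by case: ifP => // /eq_pq ->; rewrite subrr.
by rewrite mulrC -[_ * _]add0r -take0 poly_take_drop addrC subrK.
Qed.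

Lemma congX_refl K p : congX K p p.
Proof. by exists 0; rewrite mulr0 addr0. Qed.

Lemma congX_sym K p q : congX K p q -> congX K q p.
Proof. by case=> r ->; exists (- r); ring. Qed.

Lemma congX_trans K p q u : congX K p q -> congX K q u -> congX K p u.
Proof. by case=> r -> [r' ->]; exists (r + r'); ring. Qed.

Lemma congX_sub0 K p q : congX K (p - q) 0 <-> congX K p q.
Proof. by split=> -[r e]; exists r; [rewrite -[p](subrK q) e | rewrite e]; ring. Qed.

Lemma congXD K p q p' q' : congX K p q -> congX K p' q' -> congX K (p + p') (q + q').
Proof. by case=> r -> [r' ->]; exists (r + r'); ring. Qed.

Lemma congXM K p q p' q' : congX K p q -> congX K p' q' -> congX K (p * p') (q * q').
Proof. by case=> r -> [r' ->]; exists (r * q' + q * r' + 'X^K * r * r'); ring. Qed.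

Lemma congXX K p q n : congX K p q -> congX K (p ^+ n) (q ^+ n).
Proof.
by move=> pq; elim: n => [|n IHn]; [apply: congX_refl | rewrite !exprS; apply: congXM].
Qed.

Lemma congX_leq K K' p q : (K' <= K)%N -> congX K p q -> congX K' p q.
Proof. by move=> leK [r ->]; exists ('X^(K - K') * r); rewrite mulrA -exprD subnKC. Qed.

Lemma congX_poly K a b (f : nat -> R) : (K <= a)%N -> (K <= b)%N ->
  congX K (\poly_(i < a) f i) (\poly_(i < b) f i).
Proof.
move=> leKa leKb; apply/congXP => i ltiK.
by rewrite !coef_poly (leq_trans ltiK leKa) (leq_trans ltiK leKb).
Qed.

Lemma congX_comp_Xn K b p q :
  congX K p q -> congX (K * b) (p \Po 'X^b) (q \Po 'X^b).
Proof.
by case=> r ->; exists (r \Po 'X^b); rewrite comp_polyD comp_polyM comp_Xn_poly mulnC exprM.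
Qed.

Lemma congX_comp K p p' q q' : congX K p p' -> congX K q q' -> q`_0 = 0 ->
  congX K (p \Po q) (p' \Po q').
Proof.
move=> [r ->] qq' q0; apply: (@congX_trans _ _ (p' \Po q)).
  have [s ->] : congX 1 q 0 by apply/congXP => -[|//] _; rewrite q0 coef0.
  exists (s ^+ K * (r \Po 'X * s)).
  by rewrite add0r comp_polyD comp_polyM comp_Xn_poly exprMn mulrA.
elim/poly_ind: p' => [|p' c IHp]; first by rewrite !comp_poly0; apply: congX_refl.
rewrite !comp_polyD !comp_polyM !comp_polyX !comp_polyC.
by apply: congXD; [apply: congXM | apply: congX_refl].
Qed.

Lemma congX_mul_unit K p u : u`_0 = 1 -> congX K (p * u) 0 -> congX K p 0.
Proof.
move=> u0; elim: K => [|K IHK] pu0; first by exists p; rewrite expr0 mul1r add0r.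
have [r pE] := IHK (congX_leq (leqnSn K) pu0); rewrite add0r in pE.
apply/congXP => i; rewrite ltnS leq_eqVlt coef0 => /orP[/eqP-> | ltiK].
  have /congXP/(_ K (ltnSn K)) := pu0.
  by rewrite pE -mulrA !coefXnM ltnn subnn coef0M u0 mulr1 coef0.
by rewrite pE coefXnM ltiK.
Qed.

End CongruenceModXn.

Lemma coef_mul_comp_Xn (R : nzRingType) b (u p : {poly R}) i :
  (0 < b)%N -> (size u <= b)%N -> (u * (p \Po 'X^b))`_i = u`_(i %% b) * p`_(i %/ b).
Proof.
move=> b_gt0 szu; rewrite coefM (bigD1 (Ordinal (leq_ltn_trans (leq_mod i b) (ltnSn i)))) //=.
have -> : (i - i %% b = i %/ b * b)%N by rewrite {1}(divn_eq i b) addnK.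
rewrite coef_comp_poly_Xn // dvdn_mull // mulnK // big1 ?addr0 // => -[j /= le_ji] /eqP neq_j.
have [ltjb|lebj] := ltnP j b; last by rewrite (leq_sizeP _ _ (leq_trans szu lebj)) // mul0r.
rewrite coef_comp_poly_Xn //; case: ifP; rewrite ?mulr0 // => /divnK dvd_ij.
case: neq_j; apply: val_inj => /=.
by rewrite -[in RHS](subnK (le_ji : (j <= i)%N)) -dvd_ij modnMDl modn_small.
Qed.

Lemma size_1X (R : nzRingType) : size (1 + 'X : {poly R}) = 2%N.
Proof. by rewrite addrC -polyC1 size_XaddC. Qed.

Lemma pchar2_polyF2 : 2 \in [pchar {poly 'F_2}].
Proof. by rewrite (pchar_poly _ 2) pchar_Fp. Qed.

Lemma two_polyF2 : 2%:R = 0 :> {poly 'F_2}.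
Proof. exact: pcharf0 pchar2_polyF2. Qed.

Lemma mulr2n_polyF2 (p : {poly 'F_2}) : p *+ 2 = 0.
Proof. by rewrite -mulr_natl two_polyF2 mul0r. Qed.

Lemma sqr_polyF2 (p : {poly 'F_2}) : p ^+ 2 = p \Po 'X^2.
Proof.
elim/poly_ind: p => [|p a IHp]; first by rewrite comp_poly0 expr0n.
have a2 : a%:P ^+ 2 = a%:P by rewrite -rmorphXn; case: a => -[|[|//]] ?; congr _%:P; apply/val_inj.
rewrite comp_polyD comp_polyM comp_polyX comp_polyC -IHp -{2}a2.
ring: two_polyF2.
Qed.

Lemma geom_polyF2 N : (1 + 'X) * \poly_(i < N) 1 = 1 + 'X^N :> {poly 'F_2}.
Proof.
rewrite poly_def [1 + 'X]addrC [RHS]addrC; under eq_bigr do rewrite scale1r.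
by have := subrX1 ('X : {poly 'F_2}) N; rewrite !(oppr_pchar2 pchar2_polyF2) => <-.
Qed.

Lemma congX_cube_inj K (a b : {poly 'F_2}) : a`_0 = 1 -> b`_0 = 1 ->
  congX K (a ^+ 3) (b ^+ 3) -> congX K a b.
Proof.
move=> a0 b0 /congX_sub0 ab3; apply/congX_sub0.
apply: (@congX_mul_unit _ _ _ (a ^+ 2 + a * b + b ^+ 2)).
  by rewrite !coefD !expr2 !coef0M a0 b0 !mulr1; apply/val_inj.
by have -> : (a - b) * (a ^+ 2 + a * b + b ^+ 2) = a ^+ 3 - b ^+ 3 by ring.
Qed.

Lemma s2_wide B n : (n < B)%N -> (\sum_(i < B) (n %/ 2 ^ i %% 2))%N = s2 n.
Proof.
rewrite /s2; elim: B => [//|B IHB]; rewrite ltnS leq_eqVlt => /orP[/eqP <- //|ltnB].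
rewrite big_ord_recr /= IHB // divn_small ?mod0n ?addn0 //.
exact: leq_trans ltnB (ltnW (ltn_expl _ _)).
Qed.

Lemma s2_half n : s2 n = (odd n + s2 n./2)%N.
Proof.
rewrite {1}/s2 big_ord_recl expn0 divn1 modn2; congr (_ + _)%N.
case: n => [|n]; first by rewrite big_ord0 /s2 big_ord1.
rewrite -(@s2_wide n.+1); last by rewrite -divn2; lia.
by apply: eq_bigr => i _; rewrite /= expnS divnMA divn2.
Qed.

Lemma tm_half n : tm n = tm n./2 + (odd n)%:R.
Proof. by rewrite /tm s2_half natrD addrC. Qed.

Lemma tm0 : tm 0 = 0.
Proof. by rewrite /tm /s2 big_ord1. Qed.

Definition tm_poly N : {poly 'F_2} := \poly_(i < N) tm i.

Lemma Ftrunc_tm_poly K : Ftrunc K = tm_poly K.+1.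
Proof. by apply/polyP => i; rewrite !coef_poly; case: eqP => [->|]; rewrite ?tm0 ?if_same. Qed.

Lemma tm_poly_double N :
  tm_poly (2 * N) = (1 + 'X) * (tm_poly N \Po 'X^2) + 'X * (\poly_(i < N) 1 \Po 'X^2).
Proof.
apply/polyP => i; rewrite coefD !coef_mul_comp_Xn ?size_1X ?size_polyX // !coef_poly.
rewrite ltn_divLR // mulnC; case: ifP => _; last by rewrite !mulr0 addr0.
rewrite tm_half coefD coef1 coefX modn2 divn2.
by case: odd; rewrite /= ?(addr0, add0r, mul1r, mul0r).
Qed.

Definition tm_eqn (x y : {poly 'F_2}) := (1 + x) ^+ 2 * y + (1 + x) ^+ 3 * y ^+ 2 + x.

Lemma congX_tm_eqn K x y y' : congX K y y' -> congX K (tm_eqn x y) (tm_eqn x y').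
Proof.
move=> yy'; rewrite /tm_eqn.
by do ![exact: yy' | exact: congX_refl | apply: congXD | apply: congXM | apply: congXX].
Qed.

Lemma comp_tm_eqn y g : tm_eqn 'X y \Po g = tm_eqn g (y \Po g).
Proof.
by rewrite /tm_eqn !comp_polyD !comp_polyM !comp_polyD -polyC1 comp_polyC comp_polyX; ring.
Qed.

Lemma tm_eqn_tm_poly N : congX (2 * N) (tm_eqn 'X (tm_poly (2 * N))) 0.
Proof.
set T := tm_poly (2 * N); set S := tm_poly N \Po 'X^2.
have geom : (1 + 'X) ^+ 2 * (\poly_(i < N) 1 \Po 'X^2) = 1 + 'X^(2 * N) :> {poly 'F_2}.
  by rewrite sqr_polyF2 -comp_polyM geom_polyF2 rmorphD rmorph1 /= comp_Xn_poly -exprM.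
have [r Sr] : congX (2 * N) S (T ^+ 2).
  by rewrite sqr_polyF2 mulnC; apply: congX_comp_Xn; apply: congX_poly; lia.
have TE : (1 + 'X) ^+ 2 * T = (1 + 'X) ^+ 3 * S + 'X * (1 + 'X^(2 * N)).
  by rewrite -geom /T tm_poly_double -/S; ring.
exists ((1 + 'X) ^+ 3 * r + 'X); rewrite /tm_eqn TE Sr.
by move: ((1 + 'X) ^+ 3) => u; ring: two_polyF2.
Qed.

Lemma tm_eqn_Ftrunc K : congX K.+1 (tm_eqn 'X (Ftrunc K)) 0.
Proof.
apply: congX_trans (congX_leq _ (tm_eqn_tm_poly K.+1)); last by lia.
by apply: congX_tm_eqn; rewrite Ftrunc_tm_poly; apply: congX_poly; lia.
Qed.

Lemma Ftrunc_comp_Gtrunc c K : c 0%N = 0 ->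
  (forall N, (Ftrunc N \Po Gtrunc c N)`_N = (N == 1%N)%:R) ->
  congX K.+1 (Ftrunc K \Po Gtrunc c K) 'X.
Proof.
move=> c0 FG; apply/congXP => i ltiK; rewrite coefX -FG.
apply: (congXP _ _ _).1 (ltnSn i); apply: congX_comp; rewrite ?coef_poly //.
all: by apply: congX_poly; lia.
Qed.

Lemma tm_eqn_Gtrunc c K : is_comp_inverse c -> congX K.+1 (tm_eqn (Gtrunc c K) 'X) 0.
Proof.
case=> c0 [_ FG]; set G := Gtrunc c K.
have G0 : G`_0 = 0 by rewrite coef_poly.
have := congX_comp (tm_eqn_Ftrunc K) (congX_refl _ G) G0.
rewrite comp_tm_eqn comp_poly0; apply: congX_trans.
by apply: congX_tm_eqn; apply: congX_sym; apply: Ftrunc_comp_Gtrunc.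
Qed.

Lemma mulX_tm_eqn (g : {poly 'F_2}) : 'X * tm_eqn g 'X = (1 + 'X + 'X * g) ^+ 3 + (1 + 'X).
Proof.
(* Over the integers the two sides differ by -2 (W^2 + W + 1 + X), where W = X (1 + g). *)
rewrite -[RHS]addr0 -(mulr2n_polyF2 (- (('X * (1 + g)) ^+ 2 + 'X * (1 + g) + 1 + 'X))).
by rewrite /tm_eqn; ring.
Qed.

Lemma Gtrunc_cube c K : is_comp_inverse c ->
  congX K.+2 ((1 + 'X + 'X * Gtrunc c K) ^+ 3) (1 + 'X).
Proof.
move/(tm_eqn_Gtrunc K) => [r]; rewrite add0r => Er.
by exists r; rewrite [in RHS]exprS -mulrA -Er mulX_tm_eqn addrCA -mulr2n mulr2n_polyF2 addr0.
Qed.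

(* [mdb J y]: y is a sum of distinct powers 4^j with j < J (a Moser-de Bruijn number). *)
Fixpoint mdb (J y : nat) : bool :=
  if J is J'.+1 then (y %% 4 <= 1)%N && mdb J' (y %/ 4) else y == 0%N.

Lemma mdb0 J : mdb J 0.
Proof. by elim: J. Qed.

Definition mdb_poly J : {poly 'F_2} := \prod_(j < J) (1 + 'X^(4 ^ j)).

Lemma mdb_polyS J : mdb_poly J.+1 = mdb_poly J * (1 + 'X^(4 ^ J)).
Proof. by rewrite /mdb_poly big_ord_recr. Qed.

Lemma mdb_poly_rec J : mdb_poly J.+1 = (1 + 'X) * (mdb_poly J \Po 'X^4).
Proof.
rewrite /mdb_poly big_ord_recl /= expn0 expr1 rmorph_prod; congr (_ * _).
by apply: eq_bigr => j _; rewrite rmorphD rmorph1 /= comp_Xn_poly -exprM expnS mulnC.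
Qed.

Lemma coef_mdb_poly J y : (mdb_poly J)`_y = (mdb J y)%:R.
Proof.
elim: J y => [|J IHJ] y; first by rewrite /mdb_poly big_ord0 coef1.
rewrite mdb_poly_rec coef_mul_comp_Xn ?size_1X // IHJ coefD coef1 coefX /=.
by case: (y %% 4)%N (ltn_pmod y (isT : 0 < 4)%N) => [|[|[|[|//]]]] _; case: mdb;
  rewrite /= ?(addr0, add0r, mul1r, mul0r).
Qed.

Lemma mdb_poly_cube J : congX (4 ^ J) ((1 + 'X) * mdb_poly J ^+ 3) 1.
Proof.
have M0 : (mdb_poly J)`_0 = 1 by rewrite coef_mdb_poly mdb0.
have M4 : (1 + 'X) * mdb_poly J ^+ 4 = mdb_poly J + 'X^(4 ^ J) * mdb_poly J.
  rewrite (exprM _ 2 2) [mdb_poly J ^+ 2]sqr_polyF2 sqr_polyF2 -comp_polyA comp_Xn_poly -exprM.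
  by rewrite -mdb_poly_rec mdb_polyS; ring.
apply/congX_sub0; apply: (congX_mul_unit M0).
by exists (mdb_poly J); rewrite add0r mulrBl -mulrA -exprSr M4 mul1r addrC addKr.
Qed.

Definition cbrt_1X J : {poly 'F_2} := (1 + 'X) * mdb_poly J ^+ 2.

Lemma cbrt_1X_cube J : congX (4 ^ J) (cbrt_1X J ^+ 3) (1 + 'X).
Proof.
have -> : cbrt_1X J ^+ 3 = (1 + 'X) * ((1 + 'X) * mdb_poly J ^+ 3) ^+ 2.
  by rewrite /cbrt_1X; ring.
have := congXM (congX_refl _ (1 + 'X)) (congXX 2 (mdb_poly_cube J)).
by rewrite expr1n mulr1.
Qed.

Lemma coef_cbrt_1X J i : (cbrt_1X J)`_i = (mdb J (i %/ 2))%:R.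
Proof.
rewrite /cbrt_1X sqr_polyF2 coef_mul_comp_Xn ?size_1X // coef_mdb_poly.
by rewrite coefD coef1 coefX modn2; case: odd; rewrite /= ?(addr0, add0r, mul1r).
Qed.

Lemma coef_comp_inverse c J s : is_comp_inverse c -> (0 < s)%N -> (s.+1 < 4 ^ J)%N ->
  c s = (mdb J (s.+1 %/ 2))%:R.
Proof.
move=> hc s_gt0 lt_s.
have B0 : (1 + 'X + 'X * Gtrunc c s)`_0 = 1.
  by rewrite !coefD coef1 coefX coefXM /= !addr0.
have A0 : (cbrt_1X J)`_0 = 1 by rewrite coef_cbrt_1X mdb0.
have /(congX_cube_inj B0 A0) /congXP /(_ s.+1 (ltnSn _)) :=
  congX_trans (Gtrunc_cube s hc) (congX_sym (congX_leq lt_s (cbrt_1X_cube J))).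
rewrite !coefD coef1 coefX coefXM coef_poly coef_cbrt_1X ltnSn /=.
by rewrite eqSS (gtn_eqF s_gt0) add0r add0r.
Qed.

Local Close Scope ring_scope.

Lemma big_nat_blocks (R : Type) (idx : R) (op : Monoid.law idx) b N (F : nat -> R) :
  \big[op/idx]_(0 <= t < N * b) F t =
  \big[op/idx]_(0 <= q < N) \big[op/idx]_(0 <= r < b) F (q * b + r).
Proof.
elim: N => [|N IHN]; first by rewrite mul0n !big_geq.
rewrite big_nat_recr //= -IHN mulSnr (@big_cat_nat _ _ _ (N * b)) ?leq_addr //=.
by congr (op _ _); rewrite -{1}(add0n (N * b)) big_addn addKn; apply: eq_bigr => r _; rewrite addnC.
Qed.

Lemma mdb_count J : \sum_(0 <= y < 4 ^ J) mdb J y = 2 ^ J.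
Proof.
elim: J => [|J IHJ]; first by rewrite big_nat1.
rewrite expnSr big_nat_blocks expnS -IHJ big_distrr /=; apply: eq_bigr => q _.
by rewrite big_mkord !big_ord_recr big_ord0 /= !modnMDl !divnMDl //= !addn0; case: mdb.
Qed.

Lemma mdb_bound J y : mdb J y -> 3 * y < 4 ^ J.
Proof.
elim: J y => [|J IHJ] y /=; first by move/eqP ->.
by case/andP => y4 /IHJ; rewrite expnS; have := divn_eq y 4; lia.
Qed.

Lemma mdbS_small J y : y < 4 ^ J -> mdb J.+1 y = mdb J y.
Proof.
elim: J y => [|J IHJ] y; first by rewrite expn0 ltnS leqn0 => /eqP ->.
by move=> lt_y; rewrite -[LHS]/((y %% 4 <= 1) && mdb J.+1 (y %/ 4)) IHJ // ltn_divLR // -expnSr.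
Qed.

Lemma mdb_count_below J N : 4 ^ J <= 3 * N -> N <= 4 ^ J ->
  \sum_(0 <= y < N) mdb J.+1 y = 2 ^ J.
Proof.
move=> lb ub; transitivity (\sum_(0 <= y < N) mdb J y).
  by apply: eq_big_nat => y /andP[_ ltyN]; rewrite mdbS_small //; lia.
rewrite -(mdb_count J) [RHS](@big_cat_nat _ _ _ N) //=.
suff -> : \sum_(N <= y < 4 ^ J) mdb J y = 0 by rewrite addn0.
rewrite big_nat_cond big1 // => y /andP[/andP[leNy _] _].
by apply/eqP; rewrite eqb0; apply/negP => /mdb_bound; lia.
Qed.

Lemma mdb_gap J N : 4 ^ J < 3 * N -> N < 4 ^ J -> ~~ mdb J.+1 N.
Proof. by move=> lb ub; rewrite mdbS_small //; apply/negP => /mdb_bound; lia. Qed.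

Definition zero_at (c : nat -> 'F_2) s := (0 < s) && (c s == 0%R).

Section ZeroEnumeration.
Variables (c : nat -> 'F_2) (d : nat -> nat).
Hypothesis hd : is_zero_enum c d.

Lemma zero_atP s : zero_at c s <-> exists i, d i = s.
Proof. by case: hd => _ <-; rewrite /zero_at; split => [/andP[-> /eqP] | [-> ->]]. Qed.

Lemma ltn_d i j : (d i < d j) = (i < j).
Proof.
case: hd => d_incr _; apply/idP/idP => [lt_dij | /d_incr //].
rewrite ltnNge leq_eqVlt; apply/negP => /orP[/eqP eq_ji | /d_incr]; last by lia.
by move: lt_dij; rewrite eq_ji ltnn.
Qed.

Lemma count_zero_at i : \sum_(0 <= s < d i) zero_at c s = i.
Proof.
elim: i => [|i IHi].
  rewrite big_nat_cond big1 // => s /andP[/andP[_ lt_s] _].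
  by apply/eqP; rewrite eqb0; apply/negP => /zero_atP[k ek]; move: lt_s; rewrite -ek ltn_d.
rewrite (@big_cat_nat _ _ _ (d i)) //=; last by rewrite ltnW // ltn_d.
rewrite IHi big_ltn ?ltn_d //.
have -> : zero_at c (d i) by apply/zero_atP; exists i.
rewrite big_nat_cond big1 ?addn0 ?addn1 // => s /andP[/andP[lt_is lt_s] _].
apply/eqP; rewrite eqb0; apply/negP => /zero_atP[k ek].
by move: lt_is lt_s; rewrite -ek !ltn_d; lia.
Qed.

Lemma enum_zero_at x i : zero_at c x -> \sum_(0 <= s < x) zero_at c s = i -> d i = x.
Proof. by case/zero_atP => j <-; rewrite count_zero_at => ->. Qed.

End ZeroEnumeration.

Lemma sum_negb N (f : nat -> bool) : \sum_(0 <= k < N) ~~ f k = N - \sum_(0 <= k < N) f k.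
Proof.
have : \sum_(0 <= k < N) (~~ f k + f k) = N.
  by rewrite (eq_bigr (fun=> 1)) => [|k _]; [rewrite sum_nat_const_nat muln1 subn0 | case: (f k)].
by rewrite big_split /=; lia.
Qed.

Lemma count_zero_at_pairs (c : nat -> 'F_2) (f : nat -> bool) N : f 0 ->
  (forall s, 0 < s -> s < (N * 2).-1 -> (c s == 0%R) = ~~ f (s.+1 %/ 2)) ->
  \sum_(0 <= s < (N * 2).-1) zero_at c s = 2 * (N - \sum_(0 <= k < N) f k).
Proof.
move=> f0 cf; rewrite -sum_negb big_distrr /=.
transitivity (\sum_(0 <= t < N * 2) ~~ f (t %/ 2)).
  case: N cf => [|N] cf; first by rewrite !big_geq.
  rewrite [RHS](big_nat_recl _ _ _ (leq0n _)) /= f0 add0n.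
  apply: eq_big_nat => -[|s] /andP[_ lt_s]; first by rewrite /zero_at /= divn_small ?f0.
  by rewrite /zero_at cf.
rewrite big_nat_blocks; apply: eq_bigr => k _.
by rewrite big_mkord !big_ord_recr big_ord0 /= !divnMDl //= !addn0 addnn mul2n.
Qed.

Theorem mainTheorem12 (c : nat -> 'F_2) (d : nat -> nat) :
  is_comp_inverse c -> is_zero_enum c d ->
  forall m n : nat, (2 <= m)%N ->
    (2 ^ (2 * m) <= n)%N -> (3 * n <= 4 * 2 ^ (2 * m))%N ->
    z d n = 0%R.
Proof.
move=> hc hd m n m_ge2; rewrite expnM -[2 ^ 2]/4 => lb ub.
have pow2_ge4 : 4 <= 2 ^ m by rewrite -[4]/(2 ^ 2) leq_exp2l.
have pow4E : 4 ^ m = 2 ^ m * 2 ^ m by rewrite -expnMn.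
have := leq_mul pow2_ge4 (leqnn (2 ^ m)); rewrite -pow4E => pow4_ge.
set K := n + 2 ^ m; have K_def : K = n + 2 ^ m by [].
have cK s : 0 < s -> s < K * 2 * 2 -> (c s == 0%R) = ~~ mdb m.+2 (s.+1 %/ 2).
  move=> s_gt0 lt_s; rewrite (@coef_comp_inverse _ m.+2 _ hc s_gt0); first by case: mdb.
  by rewrite !expnS; lia.
have zeros : \sum_(0 <= s < (K * 2 * 2).-1) zero_at c s = 4 * n.
  rewrite (count_zero_at_pairs (f := mdb m.+2)) ?mdb0 //; last by move=> s *; apply: cK; lia.
  by rewrite mdb_count_below ?expnS; lia.
have last_zero : zero_at c (K * 2 * 2).-1.
  have gap : ~~ mdb m.+2 (K * 2) by apply: mdb_gap; rewrite expnS; lia.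
  have half : (K * 2 * 2).-1.+1 %/ 2 = K * 2 by lia.
  rewrite /zero_at cK; try lia.
  by rewrite half gap andbT; lia.
rewrite /z (enum_zero_at hd last_zero zeros) (_ : _.+1 %/ 4 = K); last by lia.
by rewrite /K PoszD addrAC subrr add0r modz_nat -(subnKC m_ge2) expnS modnMr.
Qed.
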